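(* Let $p\in\mathbb{C}[z,z^{-1}]$ be non-zero. If $\operatorname{wd}(p)=0$, then $F(r_p^{(2)})(\lambda)=0$ for all $0\le\lambda<|\operatorname{lead}(p)|$ and $F(r_p^{(2)})(\lambda)=1$ for all $\lambda\ge|\operatorname{lead}(p)|$. If $\operatorname{wd}(p)\ge1$, then \[ F\bigl(r_p^{(2)}\bigr)(\lambda)\le\frac{8\sqrt3}{\sqrt{47}}\cdot\operatorname{wd}(p)\cdot\left(\frac{\lambda}{|\operatorname{lead}(p)|}\right)^{\frac{1}{\operatorname{wd}(p)}}\quad\text{for all }\lambda\in[0,\infty). \]
   Context: For non-zero $p=\sum_{n=n^-}^{n^+}c_nz^n\in\mathbb{C}[z,z^{-1}]$ with $c_{n^-}\neq0\neq c_{n^+}$, the width is $\operatorname{wd}(p)=n^+-n^-$ and the leading coefficient is $\operatorname{lead}(p)=c_{n^+}$. The operator $r_p^{(2)}\colon L^2(\mathbb{Z})\to L^2(\mathbb{Z})$ is multiplication by $p$, with spectral density function $F(r_p^{(2)})(\lambda)=\mu_{S^1}\bigl(\{z\in S^1:|p(z)|\le\lambda\}\bigr)$, $\mu_{S^1}$ the normalized Haar measure. *)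

From mathcomp Require Import all_boot all_order all_algebra.
From mathcomp Require Import all_classical all_reals all_analysis.
From mathcomp Require Import complex.
Set Implicit Arguments. Unset Strict Implicit. Unset Printing Implicit Defensive.
Import Order.TTheory GRing.Theory Num.Theory.
Local Open Scope ring_scope.
Local Open Scope classical_set_scope.

Section Laurent.
Variable R : realType.

(* A Laurent polynomial p in C[z,z^-1] is represented by a pair (n, q) with
   n : int and q : {poly R[i]}, standing for p(z) = z^n * q(z).
   Every Laurent polynomial has such a representation; the notions below
   (evaluation, zero-ness, width, leading coefficient) do not depend on the
   chosen representation. *)

Definition laurent_eval (n : int) (q : {poly R[i]}) (z : R[i]) : R[i] :=
  z ^ n * q.[z].

Definition low_index (q : {poly R[i]}) : nat := find (fun c => c != 0) q.

(* width wd(p) = n^+ - n^-  (the shift n cancels) *)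
Definition laurent_wd (q : {poly R[i]}) : nat := (size q).-1 - low_index q.

Definition laurent_lead (q : {poly R[i]}) : R[i] := lead_coef q.

Definition cabs (z : R[i]) : R := Normc.normc z.

Definition expi (t : R) : R[i] := (cos t +i* sin t)%C.

(* normalized Haar measure on S^1 (subsets of C are intersected with S^1):
   mu(A) = (1/(2 pi)) * Leb({t in [0, 2 pi) | e^{it} in A}) *)
Definition haar_S1 (A : set R[i]) : \bar R :=
  ((2 * pi)^-1)%:E *
  lebesgue_measure ([set t : R | (0 <= t < 2 * pi)%R] `&` (expi @^-1` A)).

(* spectral density function of r_p^{(2)}:
   F(lam) = mu_{S^1}({z in S^1 : |p(z)| <= lam}) *)
Definition spec_density (n : int) (q : {poly R[i]}) (lam : R) : \bar R :=
  haar_S1 [set z | (cabs (laurent_eval n q z) <= lam)%R].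

End Laurent.

(* On the unit circle |p(z)| = |lead p| * prod_a |z - a|, the product running
   over the wd(p) roots of p z^(-n^-).  If |p(z)| <= lam = |lead p| m^wd(p), some
   factor |z - a| is at most m, so z lies on an arc close to a root.  For
   m <= 1/2 the chord-angle estimate |sin w| >= 5/6 |w| bounds each such arc
   by 10 m in angle, hence F(lam) <= wd(p) * 10 m / (2 pi) <= 2 wd(p) m; for
   m > 1/2 the trivial bound F <= 1 <= 2 m suffices.  Since 2 <= 8 sqrt 3 / sqrt 47,
   both cases give the stated estimate. *)

From mathcomp Require Import all_boot all_order all_algebra.
From mathcomp Require Import all_classical all_reals all_analysis.
From mathcomp Require Import complex.
From mathcomp.algebra_tactics Require Import ring lra.
Set Implicit Arguments. Unset Strict Implicit. Unset Printing Implicit Defensive.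
Import Order.TTheory GRing.Theory Num.Theory.
Import numFieldNormedType.Exports.
Local Open Scope ring_scope.
Local Open Scope classical_set_scope.
Local Open Scope complex_scope.

Section Trigonometric_bounds.
Variable R : realType.

Lemma ge0_derive_le (f df : R -> R) :
  (forall x : R, is_derive x (1 : R) f (df x)) -> (forall x, 0 < x -> 0 <= df x) ->
  forall x, 0 <= x -> f 0 <= f x.
Proof.
move=> f_df df_ge0 x x_ge0.
have f_der y : derivable f y 1 by exact: ex_derive.
apply: (@ger0_derive1_ndecry R f 0) => //.
- by move=> y; rewrite in_itv /= andbT => y_gt0; rewrite derive1E derive_val df_ge0.
- apply: continuous_subspaceT => y.
  exact/differentiable_continuous/derivable1_diffP.
Qed.

Lemma sin_le (x : R) : 0 <= x -> sin x <= x.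
Proof.
move=> x_ge0; rewrite -subr_ge0.
have := @ge0_derive_le (fun x => x - sin x) (fun y => 1 - cos y).
by rewrite sin0 subrr; apply.
Qed.

Lemma cos_ge (x : R) : 0 <= x -> 1 - x ^+ 2 / 2 <= cos x.
Proof.
move=> x_ge0; rewrite -subr_ge0.
have := @ge0_derive_le (fun x => cos x - 1 + x ^+ 2 / 2) (fun y => y - sin y).
rewrite cos0 expr0n /= mul0r subrr addr0 => /(_ _ _ x x_ge0).
have -> : cos x - 1 + x ^+ 2 / 2 = cos x - (1 - x ^+ 2 / 2) by ring.
apply.
- move=> y; apply: is_derive_eq.
  by rewrite /GRing.scale /=; field.
- by move=> y /ltW y_ge0; rewrite subr_ge0 sin_le.
Qed.

Lemma sin_ge (x : R) : 0 <= x -> x - x ^+ 3 / 6 <= sin x.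
Proof.
move=> x_ge0; rewrite -subr_ge0.
have := @ge0_derive_le (fun x => sin x - x + x ^+ 3 / 6)
  (fun y => cos y - 1 + y ^+ 2 / 2).
rewrite sin0 expr0n /= mul0r subrr addr0 => /(_ _ _ x x_ge0).
have -> : sin x - x + x ^+ 3 / 6 = sin x - (x - x ^+ 3 / 6) by ring.
apply.
- move=> y; apply: is_derive_eq.
  by rewrite /GRing.scale /=; field.
- by move=> y /ltW y_ge0; have := cos_ge y_ge0; lra.
Qed.

Lemma pi_ge5half : 5 / 2 <= (pi : R).
Proof.
have cos_gt0 : 0 < cos (5 / 4 : R) by have := @cos_ge (5 / 4) ltac:(lra); lra.
have pi_ge2 := pi_ge2 R.
rewrite leNgt; apply/negP => pi_lt.
have := @ltr_cos R (pi / 2) (5 / 4); rewrite !in_itv /= cos_pihalf.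
move=> /(_ ltac:(lra) ltac:(lra)) cos_mono.
have : pi / 2 < 5 / 4 :> R by lra.
by rewrite -cos_mono; lra.
Qed.

Lemma five_div_pi_le2 : 5 / pi <= 2 :> R.
Proof. by rewrite ler_pdivrMr ?pi_gt0 //; have := pi_ge5half; lra. Qed.

Lemma sin1_ge : 5 / 6 <= sin (1 : R).
Proof. by have := @sin_ge 1 ler01; rewrite expr1n; lra. Qed.

Lemma norm_sin (w : R) : `|w| <= pi -> `|sin w| = sin `|w|.
Proof.
have [w_ge0 | w_lt0] := leP 0 w => w_le.
  by rewrite !ger0_norm // sin_ge0_pi // w_ge0 -(ger0_norm w_ge0).
have sinNw_ge0 : 0 <= sin (- w).
  by rewrite sin_ge0_pi // oppr_ge0 ltW //= -(ltr0_norm w_lt0).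
by rewrite (ltr0_norm w_lt0) -normrN -sinN ger0_norm.
Qed.

(* For 0 <= u <= 1, sin u >= u - u^3/6 >= 5/6 u. *)
Lemma norm_le_norm_sin (w m : R) :
  `|w| < pi / 2 -> `|sin w| <= m -> m <= 1 / 2 -> `|w| <= 6 / 5 * m.
Proof.
move=> w_lt sin_le m_le; have pi_ge2 := pi_ge2 R.
rewrite norm_sin in sin_le; last by lra.
set u := `|w| in w_lt sin_le *; have u_ge0 : 0 <= u by exact: normr_ge0.
have u_lt1 : u < 1.
  rewrite ltNge; apply/negP => u_ge1.
  have := @ltr_sin R u 1; rewrite !in_itv /= => /(_ ltac:(lra) ltac:(lra)) sin_mono.
  have : sin 1 <= sin u by rewrite leNgt sin_mono -leNgt.
  by have := sin1_ge; lra.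
have : u ^+ 3 <= u.
  have : 0 <= u * (1 - u) * (1 + u) by rewrite !mulr_ge0 //; lra.
  by rewrite !exprS expr0; lra.
by have := sin_ge u_ge0; lra.
Qed.

End Trigonometric_bounds.

Section Unit_circle.
Variable R : realType.

Lemma cabsE (z : R[i]) : `|z| = (cabs z)%:C.
Proof. by []. Qed.

Lemma cabs_ge0 (z : R[i]) : 0 <= cabs z.
Proof. by case: z => a b; apply: sqrtr_ge0. Qed.

Lemma cabs_gt0 (z : R[i]) : z != 0 -> 0 < cabs z.
Proof.
move=> z_neq0; rewrite lt_neqAle cabs_ge0 andbT eq_sym.
by apply: contra z_neq0 => /eqP /Normc.eq0_normc ->.
Qed.

Lemma cabsB_le (x y a : R[i]) : cabs (x - y) <= cabs (x - a) + cabs (y - a).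
Proof.
have -> : x - y = (x - a) + - (y - a) by rewrite opprB addrA subrK.
by rewrite /cabs -(normcN (y - a)); apply: le_normcD.
Qed.

Lemma norm_expi (t : R) : `|expi t| = 1.
Proof. by rewrite cabsE /cabs /expi /Normc.normc cos2Dsin2 sqrtr1. Qed.

Lemma cabs_expiB (t s : R) : cabs (expi t - expi s) = 2 * `|sin ((t - s) / 2)|.
Proof.
set w := (t - s) / 2.
have cos_tBs : cos (w *+ 2) = cos t * cos s + sin t * sin s.
  by rewrite -cosB /w mulr2n; congr cos; field.
have := cos2Dsin2 t; have := cos2Dsin2 s; have := cos2Dsin2 w.
move: cos_tBs; rewrite cos_mulr2n mulr2n => cos_tBs cw cs ct.
rewrite -[X in X * _](@ger0_norm _ 2) // -normrM -sqrtr_sqr /cabs /expi /=.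
by congr Num.sqrt; rewrite !expr2 in cw cs ct cos_tBs *; lra.
Qed.

Lemma normXz_eq1 (z : R[i]) (n : int) : `|z| = 1 -> `|z ^ n| = 1.
Proof.
by move=> z1; case: n => k; rewrite ?normfV normrX z1 expr1n ?invr1.
Qed.

(* Only the roots of the part of q above its lowest nonzero coefficient are
   kept: the factor z^(low_index q) has modulus 1 on the circle. *)
Lemma norm_horner_circle (q : {poly R[i]}) : q != 0 ->
  exists2 rs : seq R[i], size rs = laurent_wd q &
    forall z, `|z| = 1 -> `|q.[z]| = `|lead_coef q| * \prod_(a <- rs) `|z - a|.
Proof.
move=> q_neq0; set k := low_index q.
have k_lt : (k < size q)%N.
  rewrite /k /low_index -has_find; apply/hasP; exists (lead_coef q).
    by rewrite lead_coefE mem_nth // prednK // size_poly_gt0.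
  by rewrite lead_coef_eq0.
have take_k : take_poly k q = 0.
  apply/polyP => i; rewrite coef_take_poly coef0; case: ifP => // i_lt.
  exact/eqP/negbFE/(before_find 0 i_lt).
set q1 := drop_poly k q.
have qE : q = q1 * 'X^k by rewrite -{1}(poly_take_drop k q) take_k add0r.
have lead_q1 : lead_coef q1 = lead_coef q.
  by rewrite qE lead_coef_Mmonic ?monicXn.
have [rs q1E] := closed_field_poly_normal q1.
exists rs.
  have := congr1 (fun p : {poly R[i]} => size p) q1E.
  rewrite size_scale ?lead_q1 ?lead_coef_eq0 //.
  rewrite size_prod_XsubC size_drop_poly /laurent_wd -/k => size_rs.
  by rewrite -subn1 subnAC subn1 size_rs.
move=> z z1; rewrite [in q.[z]]qE hornerM hornerXn normrM normrX z1 expr1n mulr1.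
rewrite q1E hornerZ horner_prod normrM lead_q1 normr_prod.
by congr (_ * _); apply: eq_bigr => a _; rewrite hornerXsubC.
Qed.

Lemma cabs_laurent_eval_expi (n : int) (q : {poly R[i]}) : q != 0 ->
  exists2 rs : seq R[i], size rs = laurent_wd q &
    forall t, cabs (laurent_eval n q (expi t)) =
              cabs (laurent_lead q) * \prod_(a <- rs) cabs (expi t - a).
Proof.
move=> q_neq0; have [rs size_rs qE] := norm_horner_circle q_neq0.
exists rs => // t; apply: complexI.
rewrite -cabsE /laurent_eval normrM normXz_eq1 ?norm_expi // mul1r.
rewrite qE ?norm_expi // rmorphM rmorph_prod /= -cabsE.
by congr (_ * _); apply: eq_bigr => a _; rewrite -cabsE.
Qed.

End Unit_circle.

Section Arc_measure.
Variable R : realType.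

Lemma lebesgue_measure_le (A B : set R) :
  A `<=` B -> (lebesgue_measure A <= lebesgue_measure B)%E.
Proof.
move=> AB; rewrite /lebesgue_measure /lebesgue_stieltjes_measure /measure_extension.
exact: le_outer_measure.
Qed.

Lemma lebesgue_measureU2_le (A B : set R) :
  (lebesgue_measure (A `|` B) <= lebesgue_measure A + lebesgue_measure B)%E.
Proof.
rewrite /lebesgue_measure /lebesgue_stieltjes_measure /measure_extension.
exact: outer_measureU2.
Qed.

Lemma lebesgue_measure_itv_cc (a b : R) :
  a <= b -> lebesgue_measure `[a, b] = (b - a)%:E.
Proof.
rewrite lebesgue_measure_itv /= lte_fin le_eqVlt => /predU1P[->|->] //.
by rewrite ltxx subrr.
Qed.

Definition near_arc (I : set R) (a : R[i]) (m : R) :=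
  [set t | I t /\ cabs (expi t - a) <= m].

(* Points of a half-turn arc within distance 2m of each other in the plane
   differ by at most 12/5 m in angle, since |sin w| <= m forces |w| <= 6/5 m. *)
Lemma near_half_arc_le (x0 m : R) (a : R[i]) : 0 <= m <= 1 / 2 ->
  (lebesgue_measure (near_arc [set t | x0 <= t < x0 + pi]%R a m) <= (5 * m)%:E)%E.
Proof.
move=> /andP[m_ge0 m_le]; have pi_ge2 := pi_ge2 R.
have [[t0 [/andP[t0_ge t0_lt] t0_near]] | empty] :=
  pselect (exists t0, near_arc [set t | x0 <= t < x0 + pi] a m t0); last first.
  rewrite (_ : near_arc _ a m = set0) ?measure0 ?lee_fin ?mulr_ge0 //.
  by apply/seteqP; split=> // t t_near; apply: empty; exists t.
apply: (@le_trans _ _ (lebesgue_measure `[t0 - 12 / 5 * m, t0 + 12 / 5 * m])).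
  apply: lebesgue_measure_le => t [/andP[t_ge t_lt] t_near] /=.
  have w_lt : `|(t - t0) / 2| < pi / 2.
    rewrite normrM [`|_^-1|]gtr0_norm // ltr_pM2r ?invr_gt0 // ltr_norml.
    by apply/andP; split; lra.
  have sin_le : `|sin ((t - t0) / 2)| <= m.
    rewrite -(@ler_pM2l _ 2) // -cabs_expiB.
    by apply: le_trans (cabsB_le _ _ a) _; lra.
  have := norm_le_norm_sin w_lt sin_le m_le.
  rewrite normrM [`|_^-1|]gtr0_norm // -ler_pdivlMr // invrK ler_norml.
  by rewrite in_itv /=; lra.
rewrite lebesgue_measure_itv_cc ?lee_fin; lra.
Qed.


Definition turn : set R := [set t | 0 <= t < 2 * pi].

Lemma near_arc_le (m : R) (a : R[i]) : 0 <= m <= 1 / 2 ->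
  (lebesgue_measure (near_arc turn a m) <= (10 * m)%:E)%E.
Proof.
move=> m_bnd.
apply: (@le_trans _ _ (lebesgue_measure
    (near_arc [set t | 0 <= t < 0 + pi]%R a m `|`
     near_arc [set t | pi <= t < pi + pi]%R a m))).
  apply: lebesgue_measure_le => t [/andP[t_ge t_lt] t_near].
  have [t_ltpi | t_gepi] := ltP t pi; [left | right]; split=> //=.
    by rewrite add0r t_ge.
  by rewrite t_gepi -mulr2n -mulr_natl.
apply: le_trans (lebesgue_measureU2_le _ _) _.
rewrite (_ : 10 * m = 5 * m + 5 * m) ?EFinD; last by ring.
by apply: leeD; apply: near_half_arc_le.
Qed.

Definition near_arcs (rs : seq R[i]) (m : R) :=
  [set t | turn t /\ exists2 a, a \in rs & cabs (expi t - a) <= m].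

Lemma near_arcs_le (m : R) (rs : seq R[i]) : 0 <= m <= 1 / 2 ->
  (lebesgue_measure (near_arcs rs m) <= ((size rs)%:R * (10 * m))%:E)%E.
Proof.
move=> m_bnd; elim: rs => [|a rs IH].
  rewrite (_ : near_arcs _ _ = set0) ?measure0 ?mul0r //.
  by apply/seteqP; split=> // t [_ [a]]; rewrite in_nil.
apply: (@le_trans _ _ (lebesgue_measure (near_arc turn a m `|` near_arcs rs m))).
  apply: lebesgue_measure_le => t [t_turn [b]].
  rewrite in_cons => /predU1P[-> | b_rs] t_near; first by left.
  by right; split=> //; exists b.
apply: le_trans (lebesgue_measureU2_le _ _) _.
rewrite /= -add1n natrD mulrDl mul1r EFinD.
exact: leeD (near_arc_le _ m_bnd) IH.
Qed.

End Arc_measure.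

Arguments turn {R}.

Section Spectral_density.
Variable R : realType.

Lemma lebesgue_measure_turn : lebesgue_measure (turn : set R) = (2 * pi)%:E.
Proof.
have pi_gt0 := pi_gt0 R.
rewrite (_ : turn = [set` `[0, 2 * pi[%R]); last first.
  by apply/seteqP; split=> t /=; rewrite /turn in_itv.
by rewrite lebesgue_measure_itv /= lte_fin mulr_gt0 // -EFinD subr0.
Qed.

Definition angle_sublevel (n : int) (q : {poly R[i]}) (lam : R) :=
  [set t | turn t /\ cabs (laurent_eval n q (expi t)) <= lam].

Lemma spec_densityE (n : int) (q : {poly R[i]}) (lam : R) :
  spec_density n q lam =
    (((2 * pi)^-1)%:E * lebesgue_measure (angle_sublevel n q lam))%E.
Proof. by []. Qed.

Lemma spec_density_le1 (n : int) (q : {poly R[i]}) (lam : R) :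
  (spec_density n q lam <= 1)%E.
Proof.
have pi_gt0 := pi_gt0 R.
have two_pi_neq0 : 2 * pi != 0 :> R by rewrite mulf_neq0 // gt_eqF.
rewrite spec_densityE (@le_trans _ _ (((2 * pi)^-1)%:E * (2 * pi)%:E)%E) //.
  apply: lee_wpmul2l; first by rewrite lee_fin invr_ge0 mulr_ge0 ?ltW.
  by rewrite -lebesgue_measure_turn; apply: lebesgue_measure_le => t [].
by rewrite -EFinM mulVf.
Qed.

Lemma spec_density_eq0 (n : int) (q : {poly R[i]}) (lam : R) :
  (forall t, lam < cabs (laurent_eval n q (expi t))) -> spec_density n q lam = 0%E.
Proof.
move=> lam_lt; rewrite spec_densityE (_ : angle_sublevel _ _ _ = set0).
  by rewrite measure0 mule0.
by apply/seteqP; split=> // t [_]; rewrite leNgt lam_lt.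
Qed.

Lemma spec_density_eq1 (n : int) (q : {poly R[i]}) (lam : R) :
  (forall t, cabs (laurent_eval n q (expi t)) <= lam) -> spec_density n q lam = 1%E.
Proof.
move=> le_lam; have pi_gt0 := pi_gt0 R.
rewrite spec_densityE (_ : angle_sublevel _ _ _ = turn) ?lebesgue_measure_turn.
  by rewrite -EFinM mulVf // mulf_neq0 // gt_eqF.
by apply/seteqP; split=> [t [] | t t_turn] //; split.
Qed.

Lemma angle_sublevel_sub_near_arcs (n : int) (q : {poly R[i]}) (rs : seq R[i])
    (m : R) :
  0 < cabs (laurent_lead q) -> rs != [::] -> 0 <= m ->
  (forall t, cabs (laurent_eval n q (expi t)) =
             cabs (laurent_lead q) * \prod_(a <- rs) cabs (expi t - a)) ->
  angle_sublevel n q (cabs (laurent_lead q) * m ^+ size rs) `<=` near_arcs rs m.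
Proof.
move=> lead_gt0 rs_neq0 m_ge0 qE t [t_turn]; rewrite qE => t_le; split=> //.
apply: contrapT => far; move: t_le; apply/negP; rewrite -ltNge ltr_pM2l //.
have -> : m ^+ size rs = \prod_(a <- rs) m.
  by rewrite big_const_seq count_predT iter_mulr_1.
rewrite !big_seq; apply: ltr_prod.
  by case: rs rs_neq0 {qE far} => // a rs _; apply/hasP; exists a; rewrite ?mem_head.
move=> a a_rs; rewrite m_ge0 ltNge; apply/negP => near_a.
by apply: far; exists a.
Qed.

Lemma spec_density_le_near_roots (n : int) (q : {poly R[i]}) (rs : seq R[i])
    (m : R) :
  0 < cabs (laurent_lead q) -> rs != [::] -> 0 <= m <= 1 / 2 ->
  (forall t, cabs (laurent_eval n q (expi t)) =
             cabs (laurent_lead q) * \prod_(a <- rs) cabs (expi t - a)) ->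
  (spec_density n q (cabs (laurent_lead q) * m ^+ size rs) <=
   (5 / pi * (size rs)%:R * m)%:E)%E.
Proof.
move=> lead_gt0 rs_neq0 /[dup] m_bnd /andP[m_ge0 _] qE; have pi_gt0 := pi_gt0 R.
rewrite spec_densityE.
apply: (@le_trans _ _ (((2 * pi)^-1)%:E * ((size rs)%:R * (10 * m))%:E)%E).
  apply: lee_wpmul2l; first by rewrite lee_fin invr_ge0 mulr_ge0 ?ltW.
  apply: le_trans (near_arcs_le rs m_bnd).
  exact: lebesgue_measure_le (angle_sublevel_sub_near_arcs lead_gt0 rs_neq0 m_ge0 qE).
rewrite -EFinM lee_fin le_eqVlt; apply/orP; left; apply/eqP.
(* [field] would otherwise unfold [pi]. *)
move: pi_gt0; set p := pi; clearbody p => p_gt0.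
by field; rewrite gt_eqF.
Qed.

Lemma sqrt3_sqrt47_ge : 2 <= 8 * Num.sqrt 3 / Num.sqrt 47 :> R.
Proof.
have sqrt47_gt0 : 0 < Num.sqrt 47 :> R by rewrite sqrtr_gt0 ltr0n.
rewrite ler_pdivlMr // (_ : 8 * Num.sqrt 3 = 2 * Num.sqrt 48 :> R).
  by rewrite ler_pM2l ?ltr0n // ler_sqrt ?ler0n // ler_nat.
rewrite (_ : 48 = 4 ^+ 2 * 3 :> R); last by rewrite expr2 -!natrM.
by rewrite sqrtrM ?exprn_ge0 ?ler0n // sqrtr_sqr ger0_norm ?ler0n // mulrA -natrM.
Qed.

Lemma powR_invn_exprn (x : R) (d : nat) :
  0 <= x -> (0 < d)%N -> (x `^ d%:R^-1) ^+ d = x.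
Proof.
move=> x_ge0 d_gt0; rewrite -powR_mulrn ?powR_ge0 // -powRrM.
by rewrite mulVf ?pnatr_eq0 -?lt0n // powRr1.
Qed.

Lemma spec_density_le_roots (n : int) (q : {poly R[i]}) (rs : seq R[i]) (lam : R) :
  0 < cabs (laurent_lead q) -> (0 < size rs)%N -> 0 <= lam ->
  (forall t, cabs (laurent_eval n q (expi t)) =
             cabs (laurent_lead q) * \prod_(a <- rs) cabs (expi t - a)) ->
  (spec_density n q lam <=
   (8 * Num.sqrt 3 / Num.sqrt 47 * (size rs)%:R *
    (lam / cabs (laurent_lead q)) `^ ((size rs)%:R^-1))%:E)%E.
Proof.
move=> lead_gt0 size_gt0 lam_ge0 qE; set L := cabs _ in lead_gt0 qE *.
set d := size rs; set m := (lam / L) `^ d%:R^-1.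
set C := 8 * Num.sqrt 3 / Num.sqrt 47.
have C_ge2 : 2 <= C := sqrt3_sqrt47_ge.
have m_ge0 : 0 <= m by apply: powR_ge0.
have [m_le | m_gt] := leP m (1 / 2); last first.
  apply: le_trans (spec_density_le1 _ _ _) _; rewrite lee_fin.
  have : 2 <= C * d%:R by rewrite -[2]mulr1 ler_pM ?ler1n.
  by move/(ler_wpM2r m_ge0); lra.
have -> : lam = L * m ^+ d.
  rewrite powR_invn_exprn ?divr_ge0 ?(ltW lead_gt0) //.
  by rewrite mulrCA divff ?mulr1 ?gt_eqF.
have rs_neq0 : rs != [::] by rewrite -size_eq0 -lt0n.
apply: le_trans (spec_density_le_near_roots _ _ _ _) _ => //; first by rewrite m_ge0.
rewrite lee_fin; apply/ler_wpM2r/ler_wpM2r => //.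
exact: le_trans (five_div_pi_le2 R) C_ge2.
Qed.

End Spectral_density.

Theorem lemma2p3 (R : realType) (n : int) (q : {poly R[i]}) :
  q != 0 ->
  (laurent_wd q = 0%N ->
     (forall lam : R, 0 <= lam < cabs (laurent_lead q) ->
        spec_density n q lam = 0%E) /\
     (forall lam : R, cabs (laurent_lead q) <= lam ->
        spec_density n q lam = 1%E)) /\
  ((1 <= laurent_wd q)%N ->
     forall lam : R, 0 <= lam ->
       (spec_density n q lam <=
        (8 * Num.sqrt 3 / Num.sqrt 47 * (laurent_wd q)%:R *
         (lam / cabs (laurent_lead q)) `^ ((laurent_wd q)%:R^-1))%:E)%E).
Proof.
move=> q_neq0; have [rs size_rs qE] := cabs_laurent_eval_expi n q_neq0.
have lead_gt0 : 0 < cabs (laurent_lead q) by rewrite cabs_gt0 ?lead_coef_eq0.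
rewrite -size_rs; split=> [/size0nil rs_nil | size_gt0 lam lam_ge0].
  have qL t : cabs (laurent_eval n q (expi t)) = cabs (laurent_lead q).
    by rewrite qE rs_nil big_nil mulr1.
  split=> [lam /andP[_ lam_lt] | lam lam_ge].
  - by apply: spec_density_eq0 => t; rewrite qL.
  - by apply: spec_density_eq1 => t; rewrite qL.
exact: spec_density_le_roots.
Qed.
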